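(* Let $M,N$ be integers, let $m_0$ be a trigonometric polynomial with $m_0(0)=1$, let $C\in\mathbb{R}$, and let $$\widehat\phi(\xi)=C\prod_{j=0}^{\infty}m_0\Big(\frac{\xi}{p^{N-j}}\Big),\qquad \xi\in\mathbb{Q}_p .$$ If $\operatorname{supp}\widehat\phi\subset B_M(0)$, then there exist at most $\frac{\deg m_0}{p-1}$ integers $n$ such that $0\le n<p^{M+N}$ and $\widehat\phi\big(\frac{n}{p^M}\big)\ne0$.
   Context: $p$ is a prime, $\mathbb{Q}_p$ the field of $p$-adic numbers with norm $|\cdot|_p$; $B_M(0)=\{\xi:|\xi|_p\le p^M\}$. The fractional part of $x=p^{\gamma}\sum_{j\ge0}x_jp^j$ ($x_j\in\{0,\dots,p-1\}$, $x_0\ne0$) is $\{x\}_p=p^{\gamma}\sum_{j=0}^{-\gamma-1}x_jp^j$, $\{0\}_p=0$, and $\chi_p(x)=e^{2\pi i\{x\}_p}$. A trigonometric polynomial is a function $m(\xi)=\sum_{k=0}^{K}c_k\chi_p(k\xi)$ with $c_k\in\mathbb{C}$; its degree $\deg m$ is the largest $k$ with $c_k\ne0$. *)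

From Stdlib Require Import Reals ZArith Znumtheory List.
From Coquelicot Require Import Coquelicot.
Open Scope R_scope.

(* An element of Q_p represented as  xi = p^e * sum_{i>=0} a_i p^i  with
   digits a_i in {0,...,p-1}.  Every element of Q_p has such representations
   (the paper's normalized one x_0 <> 0 is one of them); all notions below
   are invariant under the choice of representation. *)
Record Qp (p : nat) := QP { qexp : Z; qdig : nat -> nat;
                            qdig_lt : forall i, (qdig i < p)%nat }.
Arguments QP {p}. Arguments qexp {p}. Arguments qdig {p}. Arguments qdig_lt {p}.

Definition Qp_zero (p : nat) (Hp : (0 < p)%nat) : Qp p :=
  QP 0%Z (fun _ => 0%nat) (fun _ => Hp).

Definition Qp_divpow {p} (xi : Qp p) (s : Z) : Qp p :=
  QP (qexp xi - s)%Z (qdig xi) (qdig_lt xi).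

Fixpoint digsum (p : nat) (a : nat -> nat) (n : nat) : nat :=
  match n with O => O | S n' => (digsum p a n' + a n' * p ^ n')%nat end.

(* k * xi for a natural number k: digit i of k * sum a_j p^j only depends on
   the first i+1 digits. *)
Lemma Qp_mulnat_lt p (xi : Qp p) (k : nat) :
  forall i, ((k * digsum p (qdig xi) (S i) / p ^ i) mod p < p)%nat.
Proof.
  intro i. apply Nat.mod_upper_bound.
  pose proof (qdig_lt xi 0). intro Hz; rewrite Hz in H; inversion H.
Qed.
Definition Qp_mulnat {p} (k : nat) (xi : Qp p) : Qp p :=
  QP (qexp xi) (fun i => (k * digsum p (qdig xi) (S i) / p ^ i) mod p)%nat
     (Qp_mulnat_lt p xi k).

(* n / p^M for an integer n >= 0 (base-p digits of n) *)
Lemma Qp_of_lt p (Hp : (0 < p)%nat) (n : Z) :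
  forall i, ((Z.to_nat n / p ^ i) mod p < p)%nat.
Proof. intro i. apply Nat.mod_upper_bound. intro H; subst; inversion Hp. Qed.
Definition Qp_of_frac (p : nat) (Hp : (0 < p)%nat) (n M : Z) : Qp p :=
  QP (- M)%Z (fun i => (Z.to_nat n / p ^ i) mod p)%nat (Qp_of_lt p Hp n).

Fixpoint Rsum_lt (f : nat -> R) (n : nat) : R :=
  match n with O => 0 | S n' => Rsum_lt f n' + f n' end.

Definition frac_p {p} (xi : Qp p) : R :=
  Rsum_lt (fun j => INR (qdig xi j) * powerRZ (INR p) (qexp xi + Z.of_nat j))
          (Z.to_nat (- qexp xi)).

Definition chi_p {p} (xi : Qp p) : C :=
  (cos (2 * PI * frac_p xi), sin (2 * PI * frac_p xi)).

(* |xi|_p <= p^M *)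
Definition in_ball {p} (M : Z) (xi : Qp p) : Prop :=
  forall i, qdig xi i <> 0%nat -> (- M <= qexp xi + Z.of_nat i)%Z.

Fixpoint Csum_n (f : nat -> C) (n : nat) : C :=
  match n with O => f O | S n' => Cplus (Csum_n f n') (f n) end.
Fixpoint Cprod_lt (f : nat -> C) (n : nat) : C :=
  match n with O => RtoC 1 | S n' => Cmult (Cprod_lt f n') (f n') end.

Definition trig_poly {p} (c : nat -> C) (K : nat) (xi : Qp p) : C :=
  Csum_n (fun k => Cmult (c k) (chi_p (Qp_mulnat k xi))) K.

Definition is_deg (c : nat -> C) (K d : nat) : Prop :=
  (d <= K)%nat /\ c d <> RtoC 0 /\ forall k, (d < k <= K)%nat -> c k = RtoC 0.

(* Writing xi = X / p^M with X a natural number, each factor of the infinite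
   product is m0 at a root of unity, m0(X / p^e) = Q(exp(2 pi i X / p^e)), where Q
   is the degree-d polynomial with the coefficients of m0.  Shifting the product
   by one factor gives, for X = Y mod p^(M+N),
     phi(X / p^(M+1)) = Q(exp(2 pi i X / p^(M+N+1))) * phi(Y / p^M),
   while phi(pX / p^(M+1)) = phi(X / p^M) and, by the support condition,
   phi(X / p^(M+1)) = 0 unless p divides X.  So if k values phi(n / p^M),
   n < p^(M+N), are nonzero, each of the p k residues r < p^(M+N+1) lying over
   such an n is either a root of Q at the (distinct) points
   exp(2 pi i r / p^(M+N+1)), or p times one of the k points: p k <= d + k. *)

From Stdlib Require Import Reals ZArith Znumtheory List Lia Lra Psatz.
From Coquelicot Require Import Coquelicot.
Open Scope R_scope.

(** * Polynomials and roots of unity *)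

Fixpoint Cpoly_eval (l : list C) (z : C) : C :=
  match l with nil => RtoC 0 | a :: l' => Cplus a (Cmult z (Cpoly_eval l' z)) end.

Fixpoint Cpoly_quot (l : list C) (z0 : C) : list C :=
  match l with
  | nil => nil
  | a :: l' => match l' with nil => nil | _ => Cpoly_eval l' z0 :: Cpoly_quot l' z0 end
  end.

Lemma Cpoly_eval_sub (l : list C) (z0 z : C) :
  Cminus (Cpoly_eval l z) (Cpoly_eval l z0) =
  Cmult (Cminus z z0) (Cpoly_eval (Cpoly_quot l z0) z).
Proof.
  induction l as [|a [|b l'] IH]; [simpl; ring | simpl; ring |].
  change (Cpoly_quot (a :: b :: l') z0) with
    (Cpoly_eval (b :: l') z0 :: Cpoly_quot (b :: l') z0).
  change (Cpoly_eval (?u :: ?q) ?w) with (Cplus u (Cmult w (Cpoly_eval q w))).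
  set (A := Cpoly_eval (b :: l') z) in *. set (B := Cpoly_eval (b :: l') z0) in *.
  set (D := Cpoly_eval (Cpoly_quot (b :: l') z0) z) in *.
  assert (HA : A = Cplus B (Cmult (Cminus z z0) D)) by (rewrite <- IH; ring).
  rewrite HA. ring.
Qed.

Lemma length_Cpoly_quot (l : list C) (z0 : C) :
  length (Cpoly_quot l z0) = pred (length l).
Proof. induction l as [|a [|b l'] IH]; simpl in *; auto. Qed.

Lemma last_Cpoly_quot (l : list C) (z0 : C) :
  (2 <= length l)%nat -> last (Cpoly_quot l z0) (RtoC 0) = last l (RtoC 0).
Proof.
  induction l as [|a [|b [|e l'']] IH]; simpl; intros H; try lia; [simpl; ring|].
  change (last (Cpoly_eval (b :: e :: l'') z0 :: Cpoly_quot (b :: e :: l'') z0) 0 =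
          last (b :: e :: l'') 0).
  rewrite <- IH by (simpl; lia). reflexivity.
Qed.

Lemma Cpoly_roots_lt_length (rs l : list C) :
  NoDup rs -> last l (RtoC 0) <> RtoC 0 ->
  (forall z, In z rs -> Cpoly_eval l z = RtoC 0) -> (length rs < length l)%nat.
Proof.
  revert l; induction rs as [|z0 rs IH]; intros l Hnd Hl Hr.
  { destruct l; simpl in *; [congruence | lia]. }
  inversion Hnd as [|? ? Hz0 Hnd']; subst.
  destruct l as [|a [|b l']]; [simpl in Hl; congruence| |].
  - exfalso. apply Hl. rewrite <- (Hr z0 (or_introl eq_refl)). simpl. ring.
  - assert (Hquot : (length rs < length (Cpoly_quot (a :: b :: l') z0))%nat).
    { apply IH; auto.
      - rewrite last_Cpoly_quot by (simpl; lia). exact Hl.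
      - intros z Hz.
        assert (Hsub := Cpoly_eval_sub (a :: b :: l') z0 z).
        rewrite (Hr z (or_intror Hz)), (Hr z0 (or_introl eq_refl)) in Hsub.
        destruct (Ceq_dec (Cpoly_eval (Cpoly_quot (a :: b :: l') z0) z) 0) as [E|E]; auto.
        assert (Hne : Cminus z z0 <> RtoC 0).
        { intros Hzz. apply Hz0. replace z0 with z; auto.
          transitivity (Cplus (Cminus z z0) z0); [ring|]. rewrite Hzz. ring. }
        exfalso. apply (Cmult_neq_0 _ _ Hne E). rewrite <- Hsub. ring. }
    rewrite length_Cpoly_quot in Hquot. simpl in *. lia.
Qed.

Lemma Cpoly_eval_snoc (l : list C) (a z : C) :
  Cpoly_eval (l ++ a :: nil) z = Cplus (Cpoly_eval l z) (Cmult a (Cpow z (length l))).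
Proof. induction l as [|b l IH]; simpl; [|rewrite IH]; ring. Qed.

Lemma Csum_n_Cpoly_eval (c : nat -> C) (z : C) (n : nat) :
  Csum_n (fun k => Cmult (c k) (Cpow z k)) n = Cpoly_eval (map c (seq 0 (S n))) z.
Proof.
  induction n as [|n IH]; [simpl; ring|].
  simpl Csum_n. rewrite IH, (seq_S (S n)), map_app.
  cbn [map]. rewrite Cpoly_eval_snoc, length_map, length_seq. reflexivity.
Qed.

Lemma Csum_n_ext (f g : nat -> C) (n : nat) :
  (forall k, f k = g k) -> Csum_n f n = Csum_n g n.
Proof. intros H; induction n; simpl; rewrite ?IHn, ?H; auto. Qed.

Lemma Csum_n_trailing_zeros (f : nat -> C) (d m : nat) :
  (forall k, (d < k <= d + m)%nat -> f k = RtoC 0) -> Csum_n f (d + m) = Csum_n f d.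
Proof.
  induction m as [|m IH]; intros H; [rewrite Nat.add_0_r; auto|].
  rewrite Nat.add_succ_r. simpl Csum_n. rewrite IH by (intros; apply H; lia).
  rewrite (H (S (d + m))) by lia. ring.
Qed.

Definition cis_frac (X q : nat) : C :=
  (cos (2 * PI * INR X / INR q), sin (2 * PI * INR X / INR q)).

Lemma cis_frac_mod (X q : nat) : (0 < q)%nat -> cis_frac X q = cis_frac (X mod q) q.
Proof.
  intros Hq. assert (HR : INR q <> 0) by (apply not_0_INR; lia).
  unfold cis_frac. rewrite (Nat.div_mod X q) at 1 2 by lia.
  replace (2 * PI * INR (q * (X / q) + X mod q) / INR q) with
    (2 * PI * INR (X mod q) / INR q + 2 * INR (X / q) * PI)
    by (rewrite plus_INR, mult_INR; field; exact HR).
  rewrite cos_period, sin_period. reflexivity.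
Qed.

Lemma cis_frac_pow (X q k : nat) : Cpow (cis_frac X q) k = cis_frac (k * X) q.
Proof.
  induction k as [|k IH]; simpl Cpow.
  - unfold cis_frac. simpl. unfold Rdiv. rewrite Rmult_0_r, Rmult_0_l, cos_0, sin_0.
    reflexivity.
  - rewrite IH. unfold cis_frac, Cmult. simpl fst; simpl snd.
    replace (2 * PI * INR (S k * X) / INR q) with
      (2 * PI * INR X / INR q + 2 * PI * INR (k * X) / INR q)
      by (rewrite !mult_INR, S_INR; unfold Rdiv; ring).
    rewrite cos_plus, sin_plus. f_equal; ring.
Qed.

Lemma cis_frac_scale (a X q : nat) : (0 < a)%nat -> (0 < q)%nat ->
  cis_frac (a * X) (a * q) = cis_frac X q.
Proof.
  intros Ha Hq. unfold cis_frac.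
  assert (Ha' : INR a <> 0) by (apply not_0_INR; lia).
  assert (Hq' : INR q <> 0) by (apply not_0_INR; lia).
  replace (2 * PI * INR (a * X) / INR (a * q)) with (2 * PI * INR X / INR q)
    by (rewrite !mult_INR; field; split; assumption).
  reflexivity.
Qed.

Lemma cis_frac_1 (X : nat) : cis_frac X 1 = RtoC 1.
Proof.
  rewrite (cis_frac_mod X 1) by lia. rewrite Nat.mod_1_r.
  unfold cis_frac. simpl. unfold Rdiv. rewrite Rmult_0_r, Rmult_0_l, cos_0, sin_0.
  reflexivity.
Qed.

Lemma cos_sin_inj_0_2PI (a b : R) : 0 <= a -> a < b -> b < 2 * PI ->
  cos a = cos b -> sin a = sin b -> False.
Proof.
  intros Ha Hab Hb Hc Hs.
  assert (Hsin : sin (b - a) = 0) by (rewrite sin_minus, <- Hc, <- Hs; ring).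
  assert (Hcos : cos (b - a) = 1).
  { rewrite cos_minus, <- Hc, <- Hs. pose proof (sin2_cos2 a). unfold Rsqr in *. lra. }
  destruct (sin_eq_O_2PI_0 (b - a)) as [E|[E|E]]; try lra.
  rewrite E, cos_PI in Hcos. lra.
Qed.

Lemma cis_frac_inj (X Y q : nat) : (X < q)%nat -> (Y < q)%nat ->
  cis_frac X q = cis_frac Y q -> X = Y.
Proof.
  intros HX HY Heq. unfold cis_frac in Heq. injection Heq as Hc Hs.
  assert (Hq : 0 < INR q) by (apply lt_0_INR; lia).
  pose proof PI_RGT_0 as Hpi.
  assert (Hangle : forall Z, (Z < q)%nat -> 0 <= 2 * PI * INR Z / INR q < 2 * PI).
  { intros Z HZ. apply lt_INR in HZ. pose proof (pos_INR Z). split.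
    - apply Rmult_le_pos; [nra | left; apply Rinv_0_lt_compat; lra].
    - apply (Rmult_lt_reg_r (INR q)); auto.
      unfold Rdiv. rewrite Rmult_assoc, Rinv_l by lra. nra. }
  assert (Hmono : forall U V, (U < V)%nat -> 2 * PI * INR U / INR q < 2 * PI * INR V / INR q).
  { intros U V HUV. apply lt_INR in HUV. unfold Rdiv.
    apply Rmult_lt_compat_r; [apply Rinv_0_lt_compat; lra | nra]. }
  destruct (lt_eq_lt_dec X Y) as [[H|H]|H]; auto; exfalso.
  - apply (cos_sin_inj_0_2PI _ _ (proj1 (Hangle X HX)) (Hmono X Y H) (proj2 (Hangle Y HY)));
      auto.
  - apply (cos_sin_inj_0_2PI _ _ (proj1 (Hangle Y HY)) (Hmono Y X H) (proj2 (Hangle X HX)));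
      auto.
Qed.

(** * Trigonometric polynomials at base-p digit expansions *)

Definition has_digits {p : nat} (xi : Qp p) (X : nat) : Prop :=
  forall i, qdig xi i = ((X / p ^ i) mod p)%nat.

Lemma digit_eq_div_mod_pow (p A i : nat) : (0 < p)%nat ->
  ((A / p ^ i) mod p = (A mod p ^ S i) / p ^ i)%nat.
Proof.
  intros Hp. assert (Hpi : (p ^ i <> 0)%nat) by (apply Nat.pow_nonzero; lia).
  rewrite Nat.pow_succ_r', Nat.mul_comm, Nat.Div0.mod_mul_r.
  rewrite Nat.add_comm, Nat.mul_comm, Nat.div_add_l by exact Hpi.
  rewrite (Nat.div_small (A mod p ^ i)) by (apply Nat.mod_upper_bound; exact Hpi). lia.
Qed.

Lemma digsum_digits (p X m : nat) :
  digsum p (fun i => (X / p ^ i) mod p)%nat m = (X mod p ^ m)%nat.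
Proof.
  induction m as [|m IH]; simpl digsum.
  - rewrite Nat.pow_0_r, Nat.mod_1_r. reflexivity.
  - rewrite IH, Nat.pow_succ_r', (Nat.mul_comm p), Nat.Div0.mod_mul_r. lia.
Qed.

Lemma digsum_ext (p : nat) (a b : nat -> nat) (m : nat) :
  (forall i, a i = b i) -> digsum p a m = digsum p b m.
Proof. intros H; induction m; simpl; auto; rewrite IHm, H; auto. Qed.

Lemma Qp_mulnat_digits (p : nat) (xi : Qp p) (X k : nat) : (0 < p)%nat ->
  has_digits xi X -> has_digits (Qp_mulnat k xi) (k * X).
Proof.
  intros Hp Hd i. cbn [Qp_mulnat qdig].
  rewrite (digsum_ext p (qdig xi) (fun i => (X / p ^ i) mod p)%nat (S i) Hd), digsum_digits.
  rewrite !(digit_eq_div_mod_pow p _ i Hp), Nat.Div0.mul_mod_idemp_r. reflexivity.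
Qed.

Lemma frac_p_digits (p : nat) (xi : Qp p) (X : nat) : (0 < p)%nat -> has_digits xi X ->
  frac_p xi = INR (X mod p ^ Z.to_nat (- qexp xi)) / INR (p ^ Z.to_nat (- qexp xi)).
Proof.
  intros Hp Hd. unfold frac_p.
  assert (HpR : INR p <> 0) by (apply not_0_INR; lia).
  assert (Hpartial : forall m,
    Rsum_lt (fun j => INR (qdig xi j) * powerRZ (INR p) (qexp xi + Z.of_nat j)) m
    = INR (X mod p ^ m) * powerRZ (INR p) (qexp xi)).
  { induction m as [|m IH]; simpl Rsum_lt.
    - rewrite Nat.pow_0_r, Nat.mod_1_r. simpl. ring.
    - rewrite IH, powerRZ_add, <- pow_powerRZ, Hd by exact HpR.
      rewrite Nat.pow_succ_r', (Nat.mul_comm p), Nat.Div0.mod_mul_r.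
      rewrite plus_INR, mult_INR, pow_INR. ring. }
  rewrite Hpartial. destruct (Z_le_gt_dec 0 (qexp xi)) as [H|H].
  - replace (Z.to_nat (- qexp xi)) with 0%nat by lia.
    rewrite Nat.pow_0_r, Nat.mod_1_r. simpl. field.
  - set (E := Z.to_nat (- qexp xi)).
    replace (qexp xi) with (- Z.of_nat E)%Z by (unfold E; lia).
    rewrite powerRZ_neg', <- pow_powerRZ, pow_INR. reflexivity.
Qed.

Lemma chi_p_mulnat_digits (p : nat) (xi : Qp p) (X k : nat) : (0 < p)%nat ->
  has_digits xi X ->
  chi_p (Qp_mulnat k xi) = Cpow (cis_frac X (p ^ Z.to_nat (- qexp xi))) k.
Proof.
  intros Hp Hd. rewrite cis_frac_pow, (cis_frac_mod (k * X))
    by (apply Nat.neq_0_lt_0, Nat.pow_nonzero; lia).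
  unfold chi_p. rewrite (frac_p_digits p (Qp_mulnat k xi) (k * X) Hp)
    by (apply Qp_mulnat_digits; assumption).
  unfold cis_frac. cbn [Qp_mulnat qexp]. unfold Rdiv. rewrite !Rmult_assoc. reflexivity.
Qed.

Lemma trig_poly_digits (p : nat) (xi : Qp p) (X : nat) (c : nat -> C) (K d : nat) :
  (0 < p)%nat -> is_deg c K d -> has_digits xi X ->
  trig_poly c K xi = Cpoly_eval (map c (seq 0 (S d))) (cis_frac X (p ^ Z.to_nat (- qexp xi))).
Proof.
  intros Hp [HdK [_ Hc]] Hd. unfold trig_poly.
  rewrite (Csum_n_ext _ (fun k => Cmult (c k) (Cpow (cis_frac X (p ^ Z.to_nat (- qexp xi))) k)))
    by (intros k; rewrite (chi_p_mulnat_digits p xi X) by assumption; reflexivity).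
  replace K with (d + (K - d))%nat by lia.
  rewrite Csum_n_trailing_zeros by (intros k Hk; rewrite Hc by lia; ring).
  apply Csum_n_Cpoly_eval.
Qed.

(** * Counting *)

Fixpoint nat_count (f : nat -> bool) (n : nat) : nat :=
  match n with O => O | S n' => (nat_count f n' + if f n' then 1 else 0)%nat end.

Lemma nat_count_ext (f g : nat -> bool) (n : nat) :
  (forall i, (i < n)%nat -> f i = g i) -> nat_count f n = nat_count g n.
Proof.
  induction n; intros H; simpl; auto.
  rewrite IHn by (intros; apply H; lia). rewrite H by lia. reflexivity.
Qed.

Lemma nat_count_add (f : nat -> bool) (a b : nat) :
  nat_count f (a + b) = (nat_count f a + nat_count (fun i => f (a + i)%nat) b)%nat.
Proof.
  induction b; simpl; [rewrite Nat.add_0_r; lia|]. rewrite Nat.add_succ_r. simpl. rewrite IHb. lia.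
Qed.

Lemma nat_count_le_or (f g h : nat -> bool) (n : nat) :
  (forall i, f i = true -> g i = true \/ h i = true) ->
  (nat_count f n <= nat_count g n + nat_count h n)%nat.
Proof.
  intros H. induction n; simpl; auto.
  specialize (H n). destruct (f n), (g n), (h n); lia.
Qed.

Lemma nat_count_filter (f : nat -> bool) (n : nat) :
  length (filter f (seq 0 n)) = nat_count f n.
Proof.
  induction n; auto. rewrite seq_S, filter_app, length_app, IHn. simpl.
  destruct (f n); simpl; lia.
Qed.

Lemma nat_count_mod (g : nat -> bool) (P k : nat) : (0 < P)%nat ->
  nat_count (fun r => g (r mod P)%nat) (k * P) = (k * nat_count g P)%nat.
Proof.
  intros HP. induction k; simpl; auto.
  rewrite Nat.add_comm, nat_count_add, IHk.
  rewrite (nat_count_ext (fun i => g ((k * P + i) mod P)%nat) g P); [lia|].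
  intros i Hi. rewrite Nat.add_comm, Nat.Div0.mod_add, Nat.mod_small by lia. reflexivity.
Qed.

Lemma nat_count_multiples (g : nat -> bool) (a t : nat) : (0 < a)%nat ->
  nat_count (fun r => andb (Nat.eqb (r mod a) 0) (g (r / a)%nat)) (t * a) = nat_count g t.
Proof.
  intros Ha. induction t; simpl; auto.
  rewrite Nat.add_comm, nat_count_add, IHt. f_equal.
  destruct a as [|a]; [lia|].
  rewrite (nat_count_add _ 1). cbn [nat_count].
  rewrite Nat.add_0_r, Nat.Div0.mod_mul, Nat.div_mul by lia. cbn [Nat.eqb andb].
  rewrite (nat_count_ext _ (fun _ => false)).
  - clear. induction a; cbn [nat_count]; [destruct (g t)|]; lia.
  - intros i Hi. replace (t * S a + (1 + i))%nat with ((1 + i) + t * S a)%nat by lia.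
    rewrite Nat.Div0.mod_add, Nat.mod_small by lia. reflexivity.
Qed.

Lemma nat_count_refine (g h : nat -> bool) (a P : nat) : (0 < a)%nat -> (0 < P)%nat ->
  (forall r, g (r mod P)%nat = true ->
     h r = true \/ ((r mod a = 0)%nat /\ g (r / a)%nat = true)) ->
  (a * nat_count g P <= nat_count h (a * P) + nat_count g P)%nat.
Proof.
  intros Ha HP Hsplit.
  rewrite <- (nat_count_mod g P a HP).
  rewrite <- (nat_count_multiples g a P Ha). rewrite (Nat.mul_comm P a).
  apply nat_count_le_or. intros r Hr. destruct (Hsplit r Hr) as [Hh | [Hm Hg]]; auto.
  right. rewrite Hm, Hg. reflexivity.
Qed.

Definition Czerob (z : C) : bool := if Ceq_dec z (RtoC 0) then true else false.

Lemma Czerob_spec (z : C) : Czerob z = true <-> z = RtoC 0.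
Proof. unfold Czerob. destruct (Ceq_dec z (RtoC 0)); split; congruence. Qed.

Lemma nat_count_Cpoly_roots_lt (cs : list C) (q : nat) : last cs (RtoC 0) <> RtoC 0 ->
  (nat_count (fun r => Czerob (Cpoly_eval cs (cis_frac r q))) q < length cs)%nat.
Proof.
  intros Hlast. rewrite <- nat_count_filter, <- (length_map (fun r => cis_frac r q)).
  apply Cpoly_roots_lt_length; auto.
  - apply NoDup_map_NoDup_ForallPairs; [|apply NoDup_filter, seq_NoDup].
    intros x y Hx Hy. apply filter_In in Hx as [Hx _]. apply filter_In in Hy as [Hy _].
    apply in_seq in Hx. apply in_seq in Hy. apply cis_frac_inj; lia.
  - intros z Hz. apply in_map_iff in Hz as [r [<- Hr]].
    apply filter_In in Hr as [_ Hr]. apply Czerob_spec, Hr.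
Qed.

Lemma length_le_nat_count (f : nat -> bool) (P : nat) (l : list Z) : NoDup l ->
  (forall n, In n l -> (0 <= n < Z.of_nat P)%Z /\ f (Z.to_nat n) = true) ->
  (length l <= nat_count f P)%nat.
Proof.
  intros Hnd Hl. rewrite <- nat_count_filter, <- (length_map Z.to_nat l).
  apply NoDup_incl_length.
  - apply NoDup_map_NoDup_ForallPairs; auto.
    intros x y Hx Hy. destruct (Hl x Hx), (Hl y Hy). lia.
  - intros x Hx. apply in_map_iff in Hx as [n [<- Hn]].
    destruct (Hl n Hn) as [Hrange Hf]. apply filter_In. split; auto.
    apply in_seq. lia.
Qed.

(** * The refinement equation *)

Lemma Clim_seq_unique (u : nat -> C) (a b : C) :
  filterlim u eventually (locally a) -> filterlim u eventually (locally b) -> a = b.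
Proof.
  intros Ha Hb.
  assert (PF : ProperFilter' (@eventually)) by (apply Proper_StrongProper, eventually_filter).
  exact (@filterlim_locally_unique nat R_AbsRing C_R_NormedModule eventually PF u a b Ha Hb).
Qed.

Lemma Clim_seq_succ (u : nat -> C) (a : C) :
  filterlim u eventually (locally a) -> filterlim (fun n => u (S n)) eventually (locally a).
Proof.
  intros H. apply (filterlim_comp _ _ _ S u eventually eventually); auto.
  intros P [N HN]. exists N. intros n Hn. apply HN. lia.
Qed.

Lemma Clim_seq_Cmult_l (u : nat -> C) (a g : C) :
  filterlim u eventually (locally a) ->
  filterlim (fun n => Cmult g (u n)) eventually (locally (Cmult g a)).
Proof.
  intros H. apply (filterlim_comp _ _ _ u (fun z => Cmult g z) eventually (locally a)); auto.
  apply (filterlim_scal_r (K := C_AbsRing) (V := C_NormedModule) g a).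
Qed.

Lemma Cprod_lt_succ_l (f : nat -> C) (n : nat) :
  Cprod_lt f (S n) = Cmult (f O) (Cprod_lt (fun j => f (S j)) n).
Proof. induction n; simpl in *; [|rewrite IHn]; ring. Qed.

Lemma Cprod_lt_ext (f g : nat -> C) (n : nat) :
  (forall j, f j = g j) -> Cprod_lt f n = Cprod_lt g n.
Proof. intros H; induction n; simpl; rewrite ?IHn, ?H; auto. Qed.

Lemma eq_mod_pow_le (p X Y E E' : nat) : (E' <= E)%nat ->
  (X mod p ^ E = Y mod p ^ E)%nat -> (X mod p ^ E' = Y mod p ^ E')%nat.
Proof.
  intros HE H. replace E with (E' + (E - E'))%nat in H by lia.
  rewrite Nat.pow_add_r, !Nat.Div0.mod_mul_r in H.
  assert (Hr : forall a b c, ((a mod b + b * c) mod b = a mod b)%nat).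
  { intros. rewrite Nat.mul_comm, Nat.Div0.mod_add, Nat.Div0.mod_mod. reflexivity. }
  rewrite <- (Hr X _ ((X / p ^ E') mod p ^ (E - E'))%nat), H, Hr. reflexivity.
Qed.

Lemma powerRZ_INR_le_pow_to_nat (p : nat) (L : Z) : (0 < p)%nat ->
  powerRZ (INR p) L <= INR (p ^ Z.to_nat L).
Proof.
  intros Hp. destruct (Z_le_gt_dec 0 L) as [HL|HL].
  - rewrite <- (Z2Nat.id L) at 1 by exact HL. rewrite <- pow_powerRZ, pow_INR. lra.
  - replace L with (- Z.of_nat (Z.to_nat (- L)))%Z by lia.
    rewrite powerRZ_neg', <- pow_powerRZ.
    replace (Z.to_nat (- Z.of_nat (Z.to_nat (- L)))) with 0%nat by lia.
    simpl. rewrite <- Rinv_1. apply Rinv_le_contravar; [lra|].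
    apply pow_R1_Rle. apply (le_INR 1). lia.
Qed.

Definition Qp_nat (p : nat) (Hp0 : (0 < p)%nat) (X : nat) (M : Z) : Qp p :=
  Qp_of_frac p Hp0 (Z.of_nat X) M.

Definition trig_coefs (c : nat -> C) (d : nat) : list C := map c (seq 0 (S d)).

Section Refinement.

Variables (p : nat) (Hp0 : (0 < p)%nat) (c : nat -> C) (K d : nat) (Cst : R)
  (phi : Qp p -> C) (M N : Z).
Hypothesis Hp1 : (1 < p)%nat.
Hypothesis Hdeg : is_deg c K d.
Hypothesis Hphi : forall xi : Qp p,
  filterlim (fun n => Cmult (RtoC Cst)
                (Cprod_lt (fun j => trig_poly c K (Qp_divpow xi (N - Z.of_nat j)%Z)) n))
    eventually (locally (phi xi)).
Hypothesis Hsupp : forall xi : Qp p, phi xi <> RtoC 0 -> in_ball M xi.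

Local Notation Q := (Cpoly_eval (trig_coefs c d)).
Local Notation pt X M := (Qp_nat p Hp0 X M).

Lemma trig_poly_Qp_nat_divpow (X : nat) (M' s : Z) :
  trig_poly c K (Qp_divpow (pt X M') s) = Q (cis_frac X (p ^ Z.to_nat (M' + s))).
Proof.
  rewrite (trig_poly_digits p _ X c K d Hp0 Hdeg).
  - do 3 f_equal. cbn. lia.
  - intros i. cbn. rewrite Nat2Z.id. reflexivity.
Qed.

Lemma trig_poly_Qp_zero : trig_poly c K (Qp_zero p Hp0) = Q (RtoC 1).
Proof.
  rewrite (trig_poly_digits p _ 0 c K d Hp0 Hdeg).
  - apply f_equal, cis_frac_1.
  - intros i. cbn. rewrite Nat.Div0.div_0_l, Nat.Div0.mod_0_l. reflexivity.
Qed.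

Lemma phi_Qp_nat_succ (X Y : nat) :
  (X mod p ^ Z.to_nat (M + N) = Y mod p ^ Z.to_nat (M + N))%nat ->
  phi (pt X (M + 1)%Z) = Cmult (Q (cis_frac X (p ^ Z.to_nat (M + N + 1)))) (phi (pt Y M)).
Proof.
  intros HXY.
  apply (Clim_seq_unique (fun n => Cmult (RtoC Cst)
    (Cprod_lt (fun j => trig_poly c K (Qp_divpow (pt X (M + 1)) (N - Z.of_nat j))) (S n)))).
  { exact (Clim_seq_succ _ _ (Hphi _)). }
  eapply filterlim_ext; [|apply Clim_seq_Cmult_l, (Hphi (pt Y M))].
  intros n. rewrite Cprod_lt_succ_l, trig_poly_Qp_nat_divpow.
  replace (M + 1 + (N - Z.of_nat 0))%Z with (M + N + 1)%Z by lia.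
  rewrite (Cprod_lt_ext (fun j => trig_poly c K (Qp_divpow (pt X (M + 1)) (N - Z.of_nat (S j))))
                       (fun j => trig_poly c K (Qp_divpow (pt Y M) (N - Z.of_nat j)))).
  { ring. }
  intros j. rewrite !trig_poly_Qp_nat_divpow.
  replace (M + 1 + (N - Z.of_nat (S j)))%Z with (M + (N - Z.of_nat j))%Z by lia.
  rewrite (cis_frac_mod X), (cis_frac_mod Y) by (apply Nat.neq_0_lt_0, Nat.pow_nonzero; lia).
  do 2 f_equal. apply (eq_mod_pow_le p X Y (Z.to_nat (M + N))); [lia | exact HXY].
Qed.

Lemma phi_Qp_nat_scale (X : nat) : phi (pt (p * X)%nat (M + 1)%Z) = phi (pt X M).
Proof.
  eapply Clim_seq_unique; [apply Hphi|].
  eapply filterlim_ext; [|apply (Hphi (pt X M))].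
  intros n. cbv beta. f_equal. apply Cprod_lt_ext. intros j.
  rewrite !trig_poly_Qp_nat_divpow. f_equal.
  destruct (Z_le_gt_dec 0 (M + (N - Z.of_nat j))) as [Hj|Hj].
  - replace (Z.to_nat (M + 1 + (N - Z.of_nat j)))
      with (S (Z.to_nat (M + (N - Z.of_nat j)))) by lia.
    rewrite Nat.pow_succ_r'. symmetry. apply cis_frac_scale; [lia|].
    apply Nat.neq_0_lt_0, Nat.pow_nonzero; lia.
  - replace (Z.to_nat (M + 1 + (N - Z.of_nat j))) with 0%nat by lia.
    replace (Z.to_nat (M + (N - Z.of_nat j))) with 0%nat by lia.
    rewrite !cis_frac_1. reflexivity.
Qed.

(* Support condition: [X / p^(M+1)] is outside [B_M(0)] unless [p] divides [X]. *)
Lemma phi_Qp_nat_indivisible (X : nat) : (X mod p <> 0)%nat -> phi (pt X (M + 1)%Z) = RtoC 0.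
Proof.
  intros HX. destruct (Ceq_dec (phi (pt X (M + 1)%Z)) 0) as [E|E]; auto.
  exfalso. specialize (Hsupp _ E 0%nat).
  unfold Qp_nat, Qp_of_frac in Hsupp; cbn [qdig qexp] in Hsupp.
  rewrite Nat2Z.id, Nat.pow_0_r, Nat.div_1_r in Hsupp. specialize (Hsupp HX). lia.
Qed.

Lemma phi_Qp_nat_zero_of_neg : (M + N < 0)%Z ->
  trig_poly c K (Qp_zero p Hp0) = RtoC 1 -> phi (pt 0 M) = RtoC 0.
Proof.
  intros HL Hm0. rewrite trig_poly_Qp_zero in Hm0.
  assert (Hrel := phi_Qp_nat_succ 1 0).
  replace (Z.to_nat (M + N)) with 0%nat in Hrel by lia.
  replace (Z.to_nat (M + N + 1)) with 0%nat in Hrel by lia.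
  rewrite Nat.pow_0_r, cis_frac_1, Hm0, phi_Qp_nat_indivisible in Hrel
    by (rewrite ?Nat.mod_small; lia).
  rewrite Hrel by reflexivity. ring.
Qed.

Lemma phi_Qp_nat_lift (r : nat) : (0 <= M + N)%Z ->
  phi (pt (r mod p ^ Z.to_nat (M + N)) M) <> RtoC 0 ->
  Q (cis_frac r (p * p ^ Z.to_nat (M + N))) <> RtoC 0 ->
  (r mod p = 0)%nat /\ phi (pt (r / p) M) <> RtoC 0.
Proof.
  intros HL Hphi_r HQ.
  assert (Hrel := phi_Qp_nat_succ r (r mod p ^ Z.to_nat (M + N))).
  rewrite Nat.Div0.mod_mod in Hrel. specialize (Hrel eq_refl).
  replace (Z.to_nat (M + N + 1)) with (S (Z.to_nat (M + N))) in Hrel by lia.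
  rewrite Nat.pow_succ_r' in Hrel.
  assert (Hlift : phi (pt r (M + 1)%Z) <> RtoC 0)
    by (rewrite Hrel; exact (Cmult_neq_0 _ _ HQ Hphi_r)).
  assert (Hdiv : (r mod p = 0)%nat).
  { destruct (Nat.eq_dec (r mod p) 0) as [H0|H0]; auto.
    exfalso. exact (Hlift (phi_Qp_nat_indivisible r H0)). }
  split; auto.
  rewrite <- phi_Qp_nat_scale, <- (proj2 (Nat.Div0.div_exact r p) Hdiv). exact Hlift.
Qed.

Lemma nonzero_count_bound : trig_poly c K (Qp_zero p Hp0) = RtoC 1 ->
  ((p - 1) * nat_count (fun n => negb (Czerob (phi (pt n M)))) (p ^ Z.to_nat (M + N))
   <= d)%nat.
Proof.
  intros Hm0. set (g := fun n => negb (Czerob (phi (pt n M)))).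
  assert (Hg : forall n, g n = true <-> phi (pt n M) <> RtoC 0).
  { intros n. unfold g. rewrite <- Czerob_spec. destruct (Czerob _); split; auto. }
  destruct (Z_lt_ge_dec (M + N) 0) as [HL|HL].
  - replace (Z.to_nat (M + N)) with 0%nat by lia. simpl.
    replace (g 0%nat) with false; [lia|].
    symmetry. apply Bool.not_true_iff_false. rewrite Hg.
    intros H. exact (H (phi_Qp_nat_zero_of_neg HL Hm0)).
  - set (P := (p ^ Z.to_nat (M + N))%nat).
    assert (HP : (0 < P)%nat) by (apply Nat.neq_0_lt_0, Nat.pow_nonzero; lia).
    set (h := fun r => Czerob (Q (cis_frac r (p * P)))).
    assert (Hroots : (nat_count h (p * P) <= d)%nat).
    { enough (nat_count h (p * P) < length (trig_coefs c d))%nat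
        by (unfold trig_coefs in *; rewrite length_map, length_seq in *; lia).
      apply nat_count_Cpoly_roots_lt. unfold trig_coefs.
      rewrite seq_S, map_app. cbn [map]. rewrite last_last. apply (proj1 (proj2 Hdeg)). }
    assert (Hrefine := nat_count_refine g h p P Hp0 HP).
    enough (p * nat_count g P <= nat_count h (p * P) + nat_count g P)%nat by nia.
    apply Hrefine. intros r Hr. unfold h.
    destruct (Czerob (Q (cis_frac r (p * P)))) eqn:Hz; [left; reflexivity | right].
    assert (HQ : Q (cis_frac r (p * P)) <> RtoC 0)
      by (rewrite <- Czerob_spec, Hz; discriminate).
    destruct (phi_Qp_nat_lift r ltac:(lia) (proj1 (Hg _) Hr) HQ) as [Hdiv Hnz].
    split; [exact Hdiv | apply Hg, Hnz].
Qed.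

End Refinement.

Theorem lemma1 (p : nat) (Hp : prime (Z.of_nat p)) (Hp0 : (0 < p)%nat)
  (M N : Z) (c : nat -> C) (K d : nat) (Cst : R) (phi : Qp p -> C) :
  is_deg c K d ->
  trig_poly c K (Qp_zero p Hp0) = RtoC 1 ->
  (forall xi : Qp p,
     filterlim
       (fun n => Cmult (RtoC Cst)
          (Cprod_lt (fun j => trig_poly c K (Qp_divpow xi (N - Z.of_nat j)%Z)) n))
       eventually (locally (phi xi))) ->
  (forall xi : Qp p, phi xi <> RtoC 0 -> in_ball M xi) ->
  forall l : list Z, NoDup l ->
    (forall n, In n l ->
       (0 <= n)%Z /\ IZR n < powerRZ (INR p) (M + N) /\
       phi (Qp_of_frac p Hp0 n M) <> RtoC 0) ->
    INR (length l) <= INR d / INR (p - 1).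
Proof.
  intros Hdeg Hm0 Hphi Hsupp l Hnd Hl.
  assert (Hp1 : (1 < p)%nat) by (pose proof (prime_ge_2 _ Hp); lia).
  assert (Hlen : (length l <= nat_count (fun n => negb (Czerob (phi (Qp_nat p Hp0 n M))))
                               (p ^ Z.to_nat (M + N)))%nat).
  { apply length_le_nat_count; auto.
    intros n Hn. destruct (Hl n Hn) as (Hn0 & Hlt & Hnz). split.
    - split; auto. apply lt_IZR. rewrite <- INR_IZR_INZ.
      eapply Rlt_le_trans; [exact Hlt | apply powerRZ_INR_le_pow_to_nat; lia].
    - unfold Qp_nat. rewrite Z2Nat.id by lia.
      apply Bool.negb_true_iff, Bool.not_true_iff_false. rewrite Czerob_spec. exact Hnz. }
  assert (Hcount := nonzero_count_bound p Hp0 c K d Cst phi M N Hp1 Hdeg Hphi Hsupp Hm0).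
  apply Rle_div_r; [apply lt_0_INR; lia|].
  rewrite <- mult_INR. apply le_INR. nia.
Qed.
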